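(* Let $X$ be a locally compact space and $K\subset X$ quasi-compact. Then $L=\{S\in\mathcal{H}X: S\cap K\neq\emptyset\}$ is compact. The space $\mathcal{H}X$ is locally compact, and it is $\sigma$-compact if $X$ is $\sigma$-compact.
   Context: Quasi-compact: every open cover has a finite subcover; compact: quasi-compact Hausdorff; locally compact: every point has a compact neighbourhood (not necessarily Hausdorff); $\sigma$-compact: countable union of compact sets. $\mathcal{H}X$ is the set of nonempty $S\subset X$ such that for every finite family $(V_i)$ of open sets with $S\cap V_i\neq\emptyset$ for all $i$, $\bigcap_iV_i\neq\emptyset$. It is topologized as a subspace of $\hat{\mathcal{H}}X=\mathcal{H}X\cup\{\emptyset\}$, whose topology is generated by the sets $\{S: S\cap V\neq\emptyset\}$ ($V$ open in $X$) and $\{S: S\cap Q=\emptyset\}$ ($Q$ quasi-compact in $X$). *)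

From HB Require Import structures.
From mathcomp Require Import all_boot all_order.
From mathcomp Require Import all_classical all_reals all_analysis.
Set Implicit Arguments. Unset Strict Implicit. Unset Printing Implicit Defensive.
Local Open Scope classical_set_scope.

Definition hausdorff_set {T : topologicalType} (A : set T) : Prop :=
  forall x y, A x -> A y -> x <> y ->
    exists U V : set T, [/\ open U, open V, U x, V y & U `&` V `&` A = set0].

(** compact = quasi-compact ([compact] of mathcomp-analysis) + Hausdorff *)
Definition compact_set {T : topologicalType} (A : set T) : Prop :=
  compact A /\ hausdorff_set A.

Definition locally_compact_on {T : topologicalType} (A : set T) : Prop :=
  forall x, A x -> exists N : set T,
    [/\ N `<=` A, (exists U, [/\ open U, U x & U `&` A `<=` N]) & compact_set N].

Definition sigma_compact_on {T : topologicalType} (A : set T) : Prop :=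
  exists K : nat -> set T, (forall n, compact_set (K n)) /\ \bigcup_n K n = A.

Definition locally_compact_space (T : topologicalType) := locally_compact_on (@setT T).
Definition sigma_compact_space (T : topologicalType) := sigma_compact_on (@setT T).

Definition hyper (X : topologicalType) : Type := set X.
HB.instance Definition _ (X : topologicalType) := Choice.on (hyper X).

Definition hyper_subbase (X : topologicalType) : set (set X * bool) :=
  [set p | if p.2 then open p.1 else compact p.1].
Definition hyper_gen (X : topologicalType) (p : set X * bool) : set (hyper X) :=
  if p.2 then [set S : hyper X | S `&` p.1 !=set0]
  else [set S : hyper X | S `&` p.1 = set0].

HB.instance Definition _ (X : topologicalType) :=
  isSubBaseTopological.Build (hyper X) (@hyper_subbase X) (@hyper_gen X).

Definition HX (X : topologicalType) : set (hyper X) :=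
  [set S : hyper X | S !=set0 /\
    forall (n : nat) (V : 'I_n -> set X), (forall i, open (V i)) ->
      (forall i, S `&` V i !=set0) -> \bigcap_i V i !=set0].

From HB Require Import structures.
From mathcomp Require Import all_boot all_order finmap.
From mathcomp Require Import all_classical all_reals all_analysis.
Set Implicit Arguments. Unset Strict Implicit. Unset Printing Implicit Defensive.
Local Open Scope classical_set_scope.

(* An ultrafilter F on the hyperspace converges to its upper limit, the set of
   points every open neighbourhood of which is hit by F-almost every member; by
   compactness of K this limit again hits K and, when F contains HX, lies in HX.
   Local compactness gives the Hausdorff property: a member T of HX meets a
   Hausdorff open set in at most one point, so a point x outside T has an open
   neighbourhood W inside a compact set Q missing T, and the sets hitting W and
   those missing Q separate any S containing x from T.  Covering HX by the sets of
   members hitting compact neighbourhoods (resp. the compact pieces of X) then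
   gives local compactness (resp. sigma-compactness). *)

Definition hit {X : topologicalType} (U : set X) : set (hyper X) :=
  [set S : hyper X | S `&` U !=set0].
Definition miss {X : topologicalType} (Q : set X) : set (hyper X) :=
  [set S : hyper X | S `&` Q = set0].

Section hyperspace_topology.
Variable X : topologicalType.

Lemma open_hyper_gen (p : set X * bool) : hyper_subbase p -> open (hyper_gen p).
Proof.
move=> sp; exists [set hyper_gen p]; last exact: bigcup_set1.
by move=> _ ->; exact: finI_from1.
Qed.

Lemma open_hit (U : set X) : open U -> open (hit U).
Proof. exact: (@open_hyper_gen (U, true)). Qed.

Lemma open_miss (Q : set X) : compact Q -> open (miss Q).
Proof. exact: (@open_hyper_gen (Q, false)). Qed.

Lemma cvg_hyper (F : set_system (hyper X)) (S : hyper X) : Filter F ->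
  (forall U, open U -> hit U S -> F (hit U)) ->
  (forall Q, compact Q -> miss Q S -> F (miss Q)) -> F --> S.
Proof.
move=> FF Fhit Fmiss A [B [[D0 sD0 <-] [C D0C CS] BA]].
have [D' sD' eC] := sD0 _ D0C.
have {}CS : (\bigcap_(i in [set` D']) @hyper_gen X i) S by rewrite eC.
apply: (filterS BA); apply: (filterS (bigcup_sup D0C)); rewrite -eC.
apply: filter_bigI => -[V []] iD; have /[!inE] sp := sD' _ iD.
- by apply: Fhit => //; exact: (CS _ iD).
- by apply: Fmiss => //; exact: (CS _ iD).
Qed.

Lemma hit_miss_disjoint (U Q : set X) : U `<=` Q -> hit U `&` miss Q = set0.
Proof.
move=> UQ; apply/seteqP; split=> // S [[x [Sx Ux]] SQ].
suff : (S `&` Q) x by rewrite SQ.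
by split=> //; exact: UQ.
Qed.

End hyperspace_topology.

Definition upper_limit {X : topologicalType} (F : set_system (hyper X)) : hyper X :=
  [set x | forall W, open W -> W x -> F (hit W)].

Lemma HX_upper_limit (X : topologicalType) (F : set_system (hyper X)) :
  ProperFilter F -> F (@HX X) -> upper_limit F !=set0 -> HX (upper_limit F).
Proof.
move=> FF FHX S0; split=> // n V oV SV.
have FV : \forall R \near F, forall i, hit (V i) R.
  by apply: filter_forall => i; case: (SV i) => x [Sx Vx]; exact: Sx.
have [R [HR RV]] := filter_ex (filterI FHX FV).
exact: HR.2 n V oV RV.
Qed.

Section upper_limit.
Variables (X : topologicalType) (F : set_system (hyper X)).
Hypothesis UF : UltraFilter F.

Lemma ultra_hitVmiss (U : set X) : F (hit U) \/ F (miss U).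
Proof.
case: (in_ultra_setVsetC (hit U) UF) => [|FC]; [by left | right].
by apply: filterS FC => R /= nR; apply: contra_notP nR => /eqP/set0P.
Qed.

Lemma upper_limit_hit (Q : set X) : compact Q -> F (hit Q) -> hit Q (upper_limit F).
Proof.
move=> cQ FQ; apply: contrapT => nSQ.
have : \forall R \near F, Q `<=` ~` R.
  apply: (iffLR (compact_near_coveringP Q) cQ) => q Qq.
  have [W [oW Wq nFW]] : exists W, [/\ open W, W q & ~ F (hit W)].
    by apply: contra_notP nSQ => nW; exists q; split => // W oW Wq;
      apply: contra_notP nW => ?; exists W.
  exists (W, miss W).
    by split => //=; [exact: open_nbhs_nbhs | by case: (ultra_hitVmiss W)].
  case=> y R /= [Wy RW0] Ry.
  by suff : (R `&` W) y by rewrite RW0.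
move=> FQR; apply: (filter_not_empty F).
by apply: filterS (filterI FQR FQ) => R [QR [q [Rq Qq]]]; exact: QR q Qq Rq.
Qed.

Lemma cvg_upper_limit : F --> upper_limit F.
Proof.
apply: cvg_hyper => [U oU [x [Sx Ux]] | Q cQ SQ]; first exact: Sx.
case: (ultra_hitVmiss Q) => // /(upper_limit_hit cQ) hitQ.
by have /seteqP[/(_ _ (conj hitQ SQ))] := hit_miss_disjoint (@subset_refl _ Q).
Qed.
End upper_limit.

Lemma compact_HX_hit (X : topologicalType) (K : set X) :
  compact K -> compact (@HX X `&` hit K).
Proof.
move=> cK; rewrite compact_ultra => F UF FL.
have FK : F (hit K) by apply: filterS FL => R [].
have SK := upper_limit_hit UF cK FK.
exists (upper_limit F); split; last exact: cvg_upper_limit.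
have FHX : F (@HX X) by apply: filterS FL => R [].
have S0 : upper_limit F !=set0 by case: SK => x [Sx _]; exists x.
by split=> //; exact: HX_upper_limit FHX S0.
Qed.

Lemma hausdorff_set_sep_compact (X : topologicalType) (N C : set X) (x : X) :
  hausdorff_set N -> compact C -> C `<=` N -> N x -> ~ C x ->
  exists A B : set X, [/\ open A, open B, A x, C `<=` B & A `&` B `&` N = set0].
Proof.
move=> hN cC CN Nx nCx.
pose sep (A : set X) c := exists2 B, open B /\ B c & A `&` B `&` N = set0.
have sepS A1 A2 : A1 `<=` A2 -> C `<=` sep A2 -> C `<=` sep A1.
  move=> A12 CA2 c /CA2 [B oB AB]; exists B => //.
  by apply/seteqP; split=> // y [[/A12 ? ?] ?]; rewrite -AB.
have : \forall A \near powerset_filter_from (nbhs x), C `<=` sep A.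
  apply: (iffLR (compact_near_coveringP C) cC) => c Cc.
  have xc : x <> c by move=> e; apply: nCx; rewrite e.
  have [A [B [oA oB Ax Bc AB]]] := hN x c Nx (CN c Cc) xc.
  exists (B, [set A' | A' `<=` A]).
    by split => /=; [exact: open_nbhs_nbhs | apply: small_set_sub; exact: open_nbhs_nbhs].
  case=> c' A' /= [Bc' A'A]; exists B => //.
  by apply/seteqP; split=> // y [[/A'A ? ?] ?]; rewrite -AB.
case/(near_powerset_filter_fromP _ sepS) => A0 nA0 CA0.
pose B := \bigcup_(B in [set B | open B /\ A0 `&` B `&` N = set0]) B.
exists (interior A0), B; split.
- exact: open_interior.
- by apply: bigcup_open => ? [].
- exact: nbhs_singleton (nbhs_interior nA0).
- by move=> c /CA0 [B' [oB' B'c] AB']; exists B'.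
- apply/seteqP; split=> // y [[/interior_subset A0y [B' [_ AB'] B'y]] Ny].
  by rewrite -AB'.
Qed.

Lemma hausdorff_setS (T : topologicalType) (A B : set T) :
  A `<=` B -> hausdorff_set B -> hausdorff_set A.
Proof.
move=> AB hB x y Ax Ay xy; have [U [V [oU oV Ux Vy UVB]]] := hB x y (AB x Ax) (AB y Ay) xy.
by exists U, V; split=> //; apply/seteqP; split=> // z [UVz /AB Bz]; rewrite -UVB.
Qed.

Lemma locally_compact_space_nbhs (X : topologicalType) : locally_compact_space X ->
  forall x : X, exists U N, [/\ open U, U x, U `<=` N, compact N & hausdorff_set N].
Proof.
move=> lc x; have [N [_ [U [oU Ux UN]] [cN hN]]] := lc x Logic.I.
by exists U, N; split=> // y Uy; apply: UN.
Qed.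

Section locally_compact_hyperspace.
Variable X : topologicalType.

Lemma HX_hitI (T : hyper X) (U V : set X) : HX T -> open U -> open V ->
  hit U T -> hit V T -> U `&` V !=set0.
Proof.
move=> HT oU oV TU TV; pose W (i : 'I_2) := if val i == 0 then U else V.
have oW i : open (W i) by rewrite /W; case: ifP.
have TW i : T `&` W i !=set0 by rewrite /W; case: ifP.
have [y Wy] := HT.2 2 W oW TW.
by exists y; split; [exact: (Wy ord0) | exact: (Wy ord_max)].
Qed.

Lemma HX_eq_in_hausdorff (T : hyper X) (N U : set X) (s t : X) :
  HX T -> hausdorff_set N -> open U -> U `<=` N ->
  T s -> T t -> U s -> U t -> s = t.
Proof.
move=> HT hN oU UN Ts Tt Us Ut; apply: contrapT => st.
have [A [B [oA oB As Bt ABN]]] := hN s t (UN s Us) (UN t Ut) st.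
have [y [[Uy Ay] [_ By]]] : (U `&` A) `&` (U `&` B) !=set0.
  by apply: HX_hitI HT (openI oU oA) (openI oU oB) _ _; [exists s | exists t].
suff : (A `&` B `&` N) y by rewrite ABN.
by split; [split | exact: UN].
Qed.

Lemma HX_miss_open_nbhs (T : hyper X) (N U : set X) (x : X) :
  HX T -> hausdorff_set N -> open U -> U `<=` N -> U x -> ~ T x ->
  exists V, [/\ open V, V x, V `<=` U & T `&` V = set0].
Proof.
move=> HT hN oU UN Ux nTx; have [[t [Tt Ut]]|nTU] := pselect (T `&` U !=set0); last first.
  by exists U; split=> //; apply/seteqP; split=> // y Ty; apply: nTU; exists y.
have xt : x <> t by move=> e; apply: nTx; rewrite e.
have [A [B [oA oB Ax Bt ABN]]] := hN x t (UN x Ux) (UN t Ut) xt.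
exists (U `&` A); split=> //; first exact: openI.
apply/seteqP; split=> // s [Ts [Us As]].
have st := HX_eq_in_hausdorff HT hN oU UN Ts Tt Us Ut; rewrite st in As.
suff : (A `&` B `&` N) t by rewrite ABN.
by split; [split | exact: UN].
Qed.

Hypothesis lcX : locally_compact_space X.

Lemma HX_miss_compact_nbhs (T : hyper X) (x : X) : HX T -> ~ T x ->
  exists W Q, [/\ open W, W x, compact Q, W `<=` Q & T `&` Q = set0].
Proof.
move=> HT nTx; have [U [N [oU Ux UN cN hN]]] := locally_compact_space_nbhs lcX x.
have [V [oV Vx VU TV]] := HX_miss_open_nbhs HT hN oU UN Ux nTx.
have cNV : compact (N `\` V) by apply: compact_closedI cN (open_closedC oV).
have [A [B [oA oB Ax NVB ABN]]] :
    exists A B, [/\ open A, open B, A x, N `\` V `<=` B & A `&` B `&` N = set0].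
  by apply: hausdorff_set_sep_compact hN cNV _ (UN x Ux) _ => [y []|[]].
exists (A `&` V), (N `\` B); split.
- exact: openI.
- by [].
- exact: compact_closedI cN (open_closedC oB).
- move=> w [Aw Vw]; have Nw := UN w (VU w Vw); split=> // Bw.
  by suff : (A `&` B `&` N) w by rewrite ABN.
- apply/seteqP; split=> // q [Tq [Nq nBq]]; apply: nBq; apply: NVB; split=> // Vq.
  by suff : (T `&` V) q by rewrite TV.
Qed.

Lemma hyper_separate (S T : hyper X) (x : X) : HX T -> S x -> ~ T x ->
  exists U V : set (hyper X), [/\ open U, open V, U S, V T & U `&` V = set0].
Proof.
move=> HT Sx nTx; have [W [Q [oW Wx cQ WQ TQ]]] := HX_miss_compact_nbhs HT nTx.
exists (hit W), (miss Q); split; [exact: open_hit | exact: open_miss | by exists x | by [] |].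
exact: hit_miss_disjoint.
Qed.

Lemma hausdorff_set_HX : hausdorff_set (@HX X).
Proof.
move=> S T HS HT ST; suff [U [V [oU oV US VT UV]]] :
    exists U V : set (hyper X), [/\ open U, open V, U S, V T & U `&` V = set0].
  by exists U, V; split=> //; rewrite UV set0I.
have [[x [Sx nTx]]|] := pselect (exists x, S x /\ ~ T x).
  exact: hyper_separate HT Sx nTx.
move=> nST; have [x [Tx nSx]] : exists x, T x /\ ~ S x.
  apply: contrapT => nTS; apply: ST; apply/seteqP; split=> y Hy; apply: contrapT => nH.
  - by apply: nST; exists y.
  - by apply: nTS; exists y.
have [V [U [oV oU VT US VU]]] := hyper_separate HS Tx nSx.
by exists U, V; split=> //; rewrite setIC.
Qed.

Lemma compact_set_HX_hit (K : set X) : compact K -> compact_set (@HX X `&` hit K).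
Proof.
move=> cK; split; first exact: compact_HX_hit.
exact: hausdorff_setS (@subIsetl _ _ _) hausdorff_set_HX.
Qed.

Lemma locally_compact_HX : locally_compact_on (@HX X).
Proof.
move=> S HS; have [x Sx] := HS.1.
have [U [N [oU Ux UN cN _]]] := locally_compact_space_nbhs lcX x.
exists (@HX X `&` hit N); split; [exact: subIsetl | | exact: compact_set_HX_hit].
exists (hit U); split; [exact: open_hit | by exists x |].
by move=> R [[y [Ry Uy]] HR]; split=> //; exists y; split=> //; exact: UN.
Qed.

Lemma sigma_compact_HX : sigma_compact_space X -> sigma_compact_on (@HX X).
Proof.
move=> [K [cK UK]]; exists (fun n => @HX X `&` hit (K n)); split.
  by move=> n; apply: compact_set_HX_hit; exact: (cK n).1.
apply/seteqP; split=> [R [n _ []] //|R HR]; have [x Rx] := HR.1.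
have [n _ Knx] : (\bigcup_n K n) x by rewrite UK.
by exists n => //; split=> //; exists x.
Qed.

End locally_compact_hyperspace.

Theorem proposition3p7 (X : topologicalType) (K : set X) :
  locally_compact_space X -> compact K ->
  [/\ compact_set [set S : hyper X | HX S /\ S `&` K !=set0],
      locally_compact_on (@HX X)
    & sigma_compact_space X -> sigma_compact_on (@HX X)].
Proof.
move=> lcX cK; split.
- exact: compact_set_HX_hit.
- exact: locally_compact_HX.
- exact: sigma_compact_HX.
Qed.
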